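(* Let $\theta,\theta_1,\dots,\theta_k\in(0,\pi)$. Then $\sum_{i=1}^k\theta_i<\theta$ if and only if $\sin\big(\theta-\sum_{i\in I}\theta_i\big)>0$ for every subset $I\subseteq\{1,\dots,k\}$ (including $I=\emptyset$). *)

From mathcomp Require Import all_boot all_order all_algebra.
From mathcomp Require Import all_classical all_reals all_analysis.

From mathcomp Require Import all_boot all_order all_algebra.
From mathcomp Require Import all_classical all_reals all_analysis.
From mathcomp Require Import lra.
Import Order.TTheory GRing.Theory Num.Theory.
Local Open Scope ring_scope.

(* If the total angle is below [th], every partial difference [th - S_I] lies
   in (0, pi), where sin is positive.  Conversely, argue by induction on [I]:
   if [S_J < th] and the added angle is below pi, then [th - S_I] exceeds -pi,
   and on (-pi, 0] sin is nonpositive, so positivity of its sine forces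
   [S_I < th]. *)

Lemma sumr_set_le {R : numDomainType} {T : finType} (F : T -> R) (A : {set T}) :
  (forall i, 0 <= F i) -> \sum_(i in A) F i <= \sum_i F i.
Proof.
move=> F_ge0; rewrite [leRHS](bigID (mem A)) /= lerDl.
exact: sumr_ge0.
Qed.

Lemma sin_gt0_gtNpi {R : realType} {x : R} : 0 < sin x -> - pi < x -> 0 < x.
Proof.
move=> + x_gtNpi; apply: contraTT; rewrite -!leNgt => x_le0.
have : 0 <= sin (- x) by apply: sin_ge0_pi; rewrite oppr_ge0 x_le0 lerNl ltW.
by rewrite sinN oppr_ge0.
Qed.

Section PartialSums.
Context {R : realType} {T : finType} {F : T -> R} {a : R}.

Lemma sin_sub_sum_gt0 : (forall i, 0 <= F i) -> a < pi -> \sum_i F i < a ->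
  forall A : {set T}, 0 < sin (a - \sum_(i in A) F i).
Proof.
move=> F_ge0 a_ltpi sum_lta A; apply: sin_gt0_pi; apply/andP; split.
- by rewrite subr_gt0 (le_lt_trans (sumr_set_le _ A F_ge0)).
- by rewrite ltrBlDr (lt_le_trans a_ltpi) // lerDl sumr_ge0.
Qed.

Lemma sum_lt_of_sin_sub_gt0 : - pi < a -> (forall i, F i < pi) ->
    (forall A : {set T}, 0 < sin (a - \sum_(i in A) F i)) ->
  forall A : {set T}, \sum_(i in A) F i < a.
Proof.
move=> a_gtNpi F_ltpi sin_gt0 A; rewrite -subr_gt0.
apply: (sin_gt0_gtNpi (sin_gt0 A)).
elim: {A}#|A| {-2}A (eqxx #|A|) => [|n IH] A /eqP cardA.
  by rewrite (cards0_eq cardA) big_set0 subr0.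
have [x xA] : exists x, x \in A by apply/card_gt0P; rewrite cardA.
have sumD1_lta : \sum_(i in A :\ x) F i < a.
  rewrite -subr_gt0; apply: (sin_gt0_gtNpi (sin_gt0 _) (IH _ _)).
  by rewrite -eqSS -cardA (cardsD1 x A) xA add1n.
rewrite (big_setD1 x xA) /=; have := F_ltpi x; lra.
Qed.

End PartialSums.

Theorem lemma2p1 (R : realType) (k : nat) (th : R) (ths : 'I_k -> R) :
  0 < th < pi ->
  (forall i, 0 < ths i < pi) ->
  (\sum_(i < k) ths i < th <->
   forall I : {set 'I_k}, 0 < sin (th - \sum_(i in I) ths i)).
Proof.
move=> /andP[th_gt0 th_ltpi] ths_bnd.
have ths_ge0 i : 0 <= ths i by case/andP: (ths_bnd i) => /ltW.
have ths_ltpi i : ths i < pi by case/andP: (ths_bnd i).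
split; first exact: sin_sub_sum_gt0.
have th_gtNpi : - pi < th by rewrite (lt_trans _ th_gt0) // oppr_lt0 pi_gt0.
move=> /(sum_lt_of_sin_sub_gt0 th_gtNpi ths_ltpi)/(_ finset.setT).
by under eq_bigl do rewrite finset.in_setT.
Qed.
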